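(* Let $B=(B,+,0)$ be a unitary magma and $(X,\varphi)$ a $B$-action. Then $$\big(X\rtimes_\varphi B,\ \langle1,0\rangle,\ \pi_X,\ \langle0,1\rangle,\ \pi_B\big)$$ is a retraction point from $X$ to $B$, where $\langle1,0\rangle(x)=(x,0)$, $\pi_X(x,b)=x$, $\langle0,1\rangle(b)=(0,b)$ and $\pi_B(x,b)=b$.
   Context: A unitary magma is a set with a binary operation $+$ and an element $0$ with $b+0=b=0+b$ for all $b$; morphisms preserve $+$ and $0$. A $B$-action is a pair $(X,\varphi)$ with $X$ a set and $\varphi\colon X\times B\times X\times B\to X$ a map such that: (1) there is an element $0\in X$ with $\varphi(x,0,0,0)=x=\varphi(0,0,x,0)$ for all $x\in X$; (2) $\varphi(x,b,0,0)=\varphi(x,0,0,b)=\varphi(0,0,x,b)$ for all $x\in X,b\in B$; (3) $\varphi(0,b,0,b')=0$ for all $b,b'\in B$; (4) writing $\varphi_{00}(x,b)=\varphi(x,0,0,b)$, for all $x,x'\in X$, $b,b'\in B$: $\varphi(x,b,x',b')=\varphi_{00}\big(\varphi(\varphi_{00}(x,b),b,\varphi_{00}(x',b'),b'),\,b+b'\big)$. The semidirect product $X\rtimes_\varphi B$ is the set $\{(x,b)\in X\times B\mid\varphi(x,0,0,b)=x\}$ with operation $(x,b)+(x',b')=(\varphi(x,b,x',b'),b+b')$ and neutral element $(0,0)$ (it is a unitary magma). Given a set $X$ and a unitary magma $B$, a retraction point from $X$ to $B$ is a tuple $(A,k,q,s,p)$ where $A=(A,+,0)$ is a unitary magma, $k\colon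 X\to A$ and $q\colon A\to X$ are maps, $s\colon B\to A$ and $p\colon A\to B$ are morphisms of unitary magmas, and $p(s(b))=b$, $q(k(x))=x$, $p(k(x))=0$, $q(s(b))=q(0)$, and $k(q(a))+s(p(a))=a$ for all $x\in X$, $b\in B$, $a\in A$. *)

Definition is_unitary_magma {B : Type} (addB : B -> B -> B) (zB : B) : Prop :=
  forall b, addB b zB = b /\ addB zB b = b.

Definition is_unitary_submagma {T : Type} (S : T -> Prop)
    (add : T -> T -> T) (z : T) : Prop :=
  S z /\ (forall a a', S a -> S a' -> S (add a a')) /\
  (forall a, S a -> add a z = a /\ add z a = a).

(* B-action (X, phi) with distinguished element x0 (the element 0 of (1),
   which is unique by (1)). *)
Definition is_B_action {B X : Type} (addB : B -> B -> B) (zB : B)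
    (phi : X -> B -> X -> B -> X) (x0 : X) : Prop :=
  let phi00 := fun x b => phi x zB x0 b in
  (forall x, phi x zB x0 zB = x /\ phi x0 zB x zB = x) /\
  (forall x b, phi x b x0 zB = phi x zB x0 b /\ phi x zB x0 b = phi x0 zB x b) /\
  (forall b b', phi x0 b x0 b' = x0) /\
  (forall x x' b b',
      phi x b x' b' = phi00 (phi (phi00 x b) b (phi00 x' b') b') (addB b b')).

(* Semidirect product X ⋊_phi B, as the subset of X * B ... *)
Definition sdp_carrier {B X : Type} (zB : B) (phi : X -> B -> X -> B -> X)
    (x0 : X) (a : X * B) : Prop :=
  phi (fst a) zB x0 (snd a) = fst a.

Definition sdp_add {B X : Type} (addB : B -> B -> B)
    (phi : X -> B -> X -> B -> X) (a a' : X * B) : X * B :=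
  (phi (fst a) (snd a) (fst a') (snd a'), addB (snd a) (snd a')).

Definition sdp_zero {B X : Type} (zB : B) (x0 : X) : X * B := (x0, zB).

(* Retraction point from X to B, where A is a unitary magma given as a subset
   SA of a carrier type A with operation addA and zero zA. *)
Definition is_retraction_point {X B A : Type}
    (addB : B -> B -> B) (zB : B)
    (SA : A -> Prop) (addA : A -> A -> A) (zA : A)
    (k : X -> A) (q : A -> X) (s : B -> A) (p : A -> B) : Prop :=
  is_unitary_submagma SA addA zA /\
  (forall x, SA (k x)) /\
  (forall b, SA (s b)) /\
  (forall b b', s (addB b b') = addA (s b) (s b')) /\ s zB = zA /\
  (forall a a', SA a -> SA a' -> p (addA a a') = addB (p a) (p a')) /\
  p zA = zB /\
  (forall b, p (s b) = b) /\
  (forall x, q (k x) = x) /\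
  (forall x, p (k x) = zB) /\
  (forall b, q (s b) = q zA) /\
  (forall a, SA a -> addA (k (q a)) (s (p a)) = a).


(* Each axiom of a retraction point is a B-action axiom in disguise. Writing
   φ00(x,b) = φ(x,0,0,b), the carrier of X ⋊ B is where φ00(x,b) = x, so
   axiom (4) evaluated there says precisely that the carrier is closed under
   +; axiom (2) together with the units of B gives the units of X ⋊ B;
   axiom (3) makes ⟨0,1⟩ additive; and (x,0) + (0,b) = (φ00(x,b), b) = (x,b)
   on the carrier. *)

Section SemidirectProduct.

Variables (B X : Type) (addB : B -> B -> B) (zB : B).
Variables (phi : X -> B -> X -> B -> X) (x0 : X).

Hypothesis addB0 : forall b, addB b zB = b.
Hypothesis add0B : forall b, addB zB b = b.

Hypothesis phi_unit : forall x, phi x zB x0 zB = x.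
Hypothesis phi_r0 : forall x b, phi x b x0 zB = phi x zB x0 b.
Hypothesis phi_l0 : forall x b, phi x0 zB x b = phi x zB x0 b.
Hypothesis phi_00 : forall b b', phi x0 b x0 b' = x0.
Hypothesis phi_normal : forall x x' b b',
  phi x b x' b' =
  phi (phi (phi x zB x0 b) b (phi x' zB x0 b') b') zB x0 (addB b b').

Lemma sdp_carrier_inX (x : X) : sdp_carrier zB phi x0 (x, zB).
Proof. apply phi_unit. Qed.

Lemma sdp_carrier_inB (b : B) : sdp_carrier zB phi x0 (x0, b).
Proof. apply phi_00. Qed.

Lemma sdp_carrier_add (a a' : X * B) :
  sdp_carrier zB phi x0 a -> sdp_carrier zB phi x0 a' ->
  sdp_carrier zB phi x0 (sdp_add addB phi a a').
Proof.
  destruct a as [x b], a' as [x' b']; unfold sdp_carrier, sdp_add; simpl.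
  intros Ha Ha'.
  pose proof (phi_normal x x' b b') as E.
  rewrite Ha, Ha' in E.
  symmetry; exact E.
Qed.

Lemma sdp_addr0 (a : X * B) :
  sdp_carrier zB phi x0 a -> sdp_add addB phi a (sdp_zero zB x0) = a.
Proof.
  destruct a as [x b]; unfold sdp_carrier, sdp_add, sdp_zero; simpl; intros Ha.
  rewrite phi_r0, Ha, addB0; reflexivity.
Qed.

Lemma sdp_add0r (a : X * B) :
  sdp_carrier zB phi x0 a -> sdp_add addB phi (sdp_zero zB x0) a = a.
Proof.
  destruct a as [x b]; unfold sdp_carrier, sdp_add, sdp_zero; simpl; intros Ha.
  rewrite phi_l0, Ha, add0B; reflexivity.
Qed.

Lemma sdp_inB_add (b b' : B) :
  (x0, addB b b') = sdp_add addB phi (x0, b) (x0, b').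
Proof. unfold sdp_add; simpl; rewrite phi_00; reflexivity. Qed.

Lemma sdp_split (a : X * B) :
  sdp_carrier zB phi x0 a -> sdp_add addB phi (fst a, zB) (x0, snd a) = a.
Proof.
  destruct a as [x b]; unfold sdp_carrier, sdp_add; simpl; intros Ha.
  rewrite Ha, add0B; reflexivity.
Qed.

End SemidirectProduct.

Theorem proposition5p2 (B X : Type) (addB : B -> B -> B) (zB : B)
    (phi : X -> B -> X -> B -> X) (x0 : X)
    (HB : is_unitary_magma addB zB)
    (Hphi : is_B_action addB zB phi x0) :
  is_retraction_point addB zB
    (sdp_carrier zB phi x0) (sdp_add addB phi) (sdp_zero zB x0)
    (fun x : X => (x, zB))            (* <1,0> *)
    (fun a : X * B => fst a)          (* pi_X *)
    (fun b : B => (x0, b))            (* <0,1> *)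
    (fun a : X * B => snd a).         (* pi_B *)
Proof.
  destruct Hphi as [phi_unit [phi_0 [phi_00 phi_normal]]].
  pose proof (fun b => proj1 (HB b)) as addB0.
  pose proof (fun b => proj2 (HB b)) as add0B.
  pose proof (fun x => proj1 (phi_unit x)) as phi_unit_r.
  pose proof (fun x b => proj1 (phi_0 x b)) as phi_r0.
  pose proof (fun x b => eq_sym (proj2 (phi_0 x b))) as phi_l0.
  repeat split; intros; try reflexivity.
  - apply sdp_carrier_inX, phi_unit_r.
  - apply sdp_carrier_add; assumption.
  - apply sdp_addr0; assumption.
  - apply sdp_add0r; assumption.
  - apply sdp_carrier_inX, phi_unit_r.
  - apply sdp_carrier_inB, phi_00.
  - apply sdp_inB_add, phi_00.
  - apply sdp_split; assumption.
Qed.
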